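(* Let $(X_{1,\infty},f_{1,\infty})$ and $(Y_{1,\infty},g_{1,\infty})$ be equicontinuous topological nonautonomous dynamical systems, and let $\pi_{1,\infty}=\{\pi_n\}$, $\pi_n:X_n\to Y_n$, be an equicontinuous sequence of maps with $\pi_{n+1}\circ f_n=g_n\circ\pi_n$ for all $n\ge1$. Let $\mu_{1,\infty}$ be an $f_{1,\infty}$-invariant sequence of Borel probability measures and $\nu_n:=\pi_n\mu_n$. Then $\nu_{1,\infty}=\{\nu_n\}$ is $g_{1,\infty}$-invariant, and for every $\{\mathcal{Q}_n\}\in\mathcal{E}_{\mathrm{M}}(g_{1,\infty},\nu_{1,\infty})$ the sequence $\{\pi_n^{-1}(\mathcal{Q}_n)\}$ belongs to $\mathcal{E}_{\mathrm{M}}(f_{1,\infty},\mu_{1,\infty})$. Consequently \[ h_{\mathcal{E}_{\mathrm{M}}(g_{1,\infty},\nu_{1,\infty})}(g_{1,\infty})\le h_{\mathcal{E}_{\mathrm{M}}(f_{1,\infty},\mu_{1,\infty})}(f_{1,\infty}). \]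
   Context: Topological NDS: compact metric spaces $X_n$ and continuous maps $f_n:X_n\to X_{n+1}$. A sequence of maps $\{h_n:X_n\to Z_n\}$ between metric spaces is equicontinuous if for every $\varepsilon>0$ there is $\delta>0$ with $d(h_nx,h_ny)<\varepsilon$ whenever $d(x,y)<\delta$, uniformly in $n$. Invariance: $f_n\mu_n=\mu_{n+1}$ (push-forward). $\pi_n^{-1}(\mathcal{Q}_n)=\{\pi_n^{-1}(Q):Q\in\mathcal{Q}_n\}$. Misiurewicz class $\mathcal{E}_{\mathrm{M}}(f_{1,\infty},\mu_{1,\infty})$: sequences $\{\mathcal{P}_n\}$ of finite Borel partitions $\mathcal{P}_n=\{P_{n,1},\dots,P_{n,k_n}\}$ of $X_n$ with $\sup_nk_n<\infty$ such that for every $\varepsilon>0$ there exist $\delta>0$ and compact $C_{n,i}\subset P_{n,i}$ with, for all $n$: (a) $\mu_n(P_{n,i}\setminus C_{n,i})\le\varepsilon$; (b) the distance between points of $C_{n,i}$ and $C_{n,j}$, $i\ne j$, is $\ge\delta$. Entropy: $h(f_{1,\infty};\mathcal{P}_{1,\infty})=\limsup_n\frac1nH_{\mu_1}(\bigvee_{i=0}^{n-1}f_1^{-i}\mathcal{P}_{i+1})$ with $H_\mu(\mathcal{P})=-\sum_P\mu(P)\log\mu(P)$, $f_1^i=f_i\circ\cdots\circ f_1$; $h_{\mathcal{E}}(f_{1,\infty})=\sup_{\mathcal{P}_{1,\infty}\in\mathcal{E}}h(f_{1,\infty};\mathcal{P}_{1,\infty})$ (analogously for $g$ with $\nu_1$).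 *)

From HB Require Import structures.
From mathcomp Require Import all_boot all_order all_algebra.
From mathcomp Require Import all_classical all_reals all_analysis.
Set Implicit Arguments. Unset Strict Implicit. Unset Printing Implicit Defensive.
Import Order.TTheory GRing.Theory Num.Theory.
Local Open Scope classical_set_scope.
Local Open Scope ring_scope.

(* Metric spaces (distance [mdist]) equipped with a point: needed so that the
   Borel sigma-algebra can be turned into a [measurableType]. *)
#[short(type="ptMetricType")]
HB.structure Definition PtMetric (K : numDomainType) :=
  { M of Metric K M & isPointed M }.

Definition Borel {R : realType} (T : ptMetricType R) := g_sigma_algebraType (@open T).

Definition borel_set {R : realType} (T : ptMetricType R) (A : set T) : Prop :=
  <<s @open T >> A.

Definition equicontinuous_seq {R : realType} (X Z : nat -> ptMetricType R)
    (h : forall n, X n -> Z n) : Prop :=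
  forall eps : R, 0 < eps -> exists2 delta : R, 0 < delta &
    forall n (x y : X n), mdist x y < delta -> mdist (h n x) (h n y) < eps.

(* f_1^i = f_i o ... o f_1 (0-based: X 0 is X_1). *)
Fixpoint fcomp (X : nat -> Type) (f : forall n, X n -> X n.+1) (i : nat)
  : X 0 -> X i :=
  match i as i0 return X 0 -> X i0 with
  | 0 => fun x => x
  | i'.+1 => fun x => f i' (fcomp f i' x)
  end.

Definition invariant_seq {R : realType} (X : nat -> ptMetricType R)
    (f : forall n, X n -> X n.+1) (mu : forall n, set (X n) -> \bar R) : Prop :=
  forall n (A : set (X n.+1)), borel_set A ->
    mu n (f n @^-1` A) = mu n.+1 A.

Definition borel_partition {R : realType} (T : ptMetricType R) (k : nat)
    (P : 'I_k -> set T) : Prop :=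
  [/\ forall i, borel_set (P i),
      forall i j, i != j -> P i `&` P j = set0 &
      \bigcup_(i in [set: 'I_k]) P i = [set: T]].

(* The Misiurewicz class E_M(f_{1,oo}, mu_{1,oo}) (it does not depend on f):
   a sequence of partitions P_n = {P_(n,i) : i < k n}. *)
Definition Misiurewicz {R : realType} (X : nat -> ptMetricType R)
    (mu : forall n, set (X n) -> \bar R)
    (k : nat -> nat) (P : forall n, 'I_(k n) -> set (X n)) : Prop :=
  [/\ forall n, borel_partition (P n),
      exists K : nat, forall n, (k n <= K)%N &
      forall eps : R, 0 < eps -> exists delta : R, 0 < delta /\
        exists C : forall n, 'I_(k n) -> set (X n),
          forall n,
            (forall i, [/\ compact (C n i), C n i `<=` P n i &
                          (mu n (P n i `\` C n i) <= eps%:E)%E]) /\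
            (forall i j, i != j -> forall x y, C n i x -> C n j y ->
                delta <= mdist x y)].

(* Shannon entropy of an indexed finite partition, with 0 log 0 = 0. *)
Definition Hpart {R : realType} (T : Type) (mu : set T -> \bar R)
    (I : finType) (Q : I -> set T) : R :=
  - \sum_(i : I) fine (mu (Q i)) * ln (fine (mu (Q i))).

(* The join \/_{i=0}^{m-1} (f_1^i)^{-1} P_{i+1}, indexed by choices s. *)
Definition join_piece (X : nat -> Type) (f : forall n, X n -> X n.+1)
    (k : nat -> nat) (P : forall n, 'I_(k n) -> set (X n)) (m : nat)
    (s : {dffun forall i : 'I_m, 'I_(k i)}) : set (X 0) :=
  [set x | forall i : 'I_m, P i (s i) (fcomp f i x)].

Definition entropy_part {R : realType} (X : nat -> Type)
    (f : forall n, X n -> X n.+1) (mu : forall n, set (X n) -> \bar R)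
    (k : nat -> nat) (P : forall n, 'I_(k n) -> set (X n)) : \bar R :=
  limn_esup (fun m : nat =>
    ((m%:R)^-1 * Hpart (mu 0) (join_piece f P (m := m)))%:E).

Definition entropy_EM {R : realType} (X : nat -> ptMetricType R)
    (f : forall n, X n -> X n.+1) (mu : forall n, set (X n) -> \bar R) : \bar R :=
  ereal_sup [set e | exists (k : nat -> nat) (P : forall n, 'I_(k n) -> set (X n)),
                       Misiurewicz mu P /\ e = entropy_part f mu P].

(* Everything pulls back along the factor maps: preimages of Borel sets are
   Borel, preimages of the compact cores are compact (closed in a compact
   space), and uniform equicontinuity of the [pi n] turns a uniform separation
   [delta] of the cores downstairs into a uniform separation upstairs.  Since
   [pi] intertwines the iterates, the join of the pulled-back partitions is the
   pull-back of the join, so it has the same [mu]-entropy as the original join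
   has [nu]-entropy; each entropy on the [g]-side thus occurs on the [f]-side. *)
From HB Require Import structures.
From mathcomp Require Import all_boot all_order all_algebra.
From mathcomp Require Import all_classical all_reals all_analysis.
Import Order.TTheory GRing.Theory Num.Theory.
Local Open Scope classical_set_scope.
Local Open Scope ring_scope.

Lemma equicontinuous_seq_continuous (R : realType) (X Z : nat -> ptMetricType R)
    (h : forall n, X n -> Z n) :
  equicontinuous_seq h -> forall n, continuous (h n).
Proof.
move=> eqh n x; apply/cvg_ballP => e e0; have [d d0 hd] := eqh e e0.
apply/nbhs_ballP; exists d => // y; rewrite /= ballEmdist /= => /hd.
by rewrite ballEmdist.
Qed.

Lemma borel_set_preimage (R : realType) (T U : ptMetricType R) (h : T -> U)
    (A : set U) :
  continuous h -> borel_set A -> borel_set (h @^-1` A).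
Proof.
move=> hc; rewrite /borel_set.
have sa : sigma_algebra setT (image_set_system setT h <<s @open T >>).
  by apply: sigma_algebra_image; exact: smallest_sigma_algebra.
suff : <<s @open U >> `<=` image_set_system setT h <<s @open T >>.
  by move=> /[apply]; rewrite /image_set_system /= setTI.
apply: smallest_sub => // B oB; rewrite /image_set_system /= setTI.
by apply: sub_sigma_algebra; exact: (proj1 (continuousP h) hc).
Qed.

Lemma compact_preimage (R : realType) (T U : ptMetricType R) (h : T -> U)
    (C : set U) :
  compact [set: T] -> continuous h -> compact C -> compact (h @^-1` C).
Proof.
move=> cT hc cC; apply: (subclosed_compact _ cT) => //.
move/continuous_closedP: hc; apply.
exact: compact_closed (@metric_hausdorff _ _) cC.
Qed.

Lemma borel_partition_preimage (R : realType) (T U : ptMetricType R)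
    (h : T -> U) (k : nat) (Q : 'I_k -> set U) :
  continuous h -> borel_partition Q -> borel_partition (fun i => h @^-1` Q i).
Proof.
move=> hc [Qb Qd Qc]; split.
- by move=> i; exact: borel_set_preimage.
- by move=> i j ij; rewrite -preimage_setI Qd // preimage_set0.
- by rewrite -preimage_bigcup Qc.
Qed.

Section Pullback.
Variables (R : realType) (X Y : nat -> ptMetricType R).
Variable pi : forall n, X n -> Y n.

Lemma Misiurewicz_preimage (mu : forall n, set (X n) -> \bar R)
    (k : nat -> nat) (Q : forall n, 'I_(k n) -> set (Y n)) :
  (forall n, compact [set: X n]) -> equicontinuous_seq pi ->
  Misiurewicz (fun n B => mu n (pi n @^-1` B)) Q ->
  Misiurewicz mu (fun n i => pi n @^-1` Q n i).
Proof.
move=> cX epi [Qpart [K kK] QM].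
have cpi := @equicontinuous_seq_continuous _ _ _ _ epi.
split; first by move=> n; exact: borel_partition_preimage.
  by exists K.
move=> eps eps0; have [delta [delta0 [C HC]]] := QM eps eps0.
have [d d0 close] := epi delta delta0.
exists d; split => //; exists (fun n i => pi n @^-1` C n i) => n.
have [Ccore Csep] := HC n; split.
- move=> i; have [cC sC mC] := Ccore i; split.
  + exact: compact_preimage.
  + by move=> x /sC.
  + exact: mC.
- move=> i j ij x y Cx Cy; rewrite leNgt; apply/negP => /close.
  by apply/negP; rewrite -leNgt; exact: Csep Cx Cy.
Qed.

Variables (f : forall n, X n -> X n.+1) (g : forall n, Y n -> Y n.+1).
Hypothesis pi_semiconj : forall n, pi n.+1 \o f n = g n \o pi n.

Lemma pi_fcomp i x : pi i (fcomp f i x) = fcomp g i (pi 0%N x).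
Proof.
elim: i x => [//|i IH] x /=.
by rewrite -IH; exact: (congr1 (fun h => h (fcomp f i x)) (pi_semiconj i)).
Qed.

Lemma invariant_seq_pushforward (mu : forall n, set (X n) -> \bar R) :
  (forall n, continuous (pi n)) -> invariant_seq f mu ->
  invariant_seq g (fun n B => mu n (pi n @^-1` B)).
Proof.
move=> cpi inv n A bA.
have -> : pi n @^-1` (g n @^-1` A) = f n @^-1` (pi n.+1 @^-1` A).
  by apply/seteqP; split => x /=; rewrite -[pi n.+1 _]/((pi n.+1 \o f n) x)
    pi_semiconj.
by apply: inv; exact: borel_set_preimage.
Qed.

Lemma join_piece_preimage (k : nat -> nat) (Q : forall n, 'I_(k n) -> set (Y n))
    m (s : {dffun forall i : 'I_m, 'I_(k i)}) :
  join_piece f (fun n i => pi n @^-1` Q n i) s = pi 0%N @^-1` join_piece g Q s.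
Proof.
by apply/seteqP; split => x /= H i; [rewrite -pi_fcomp | rewrite /= pi_fcomp];
  exact: H.
Qed.

Lemma entropy_part_preimage (mu : forall n, set (X n) -> \bar R)
    (k : nat -> nat) (Q : forall n, 'I_(k n) -> set (Y n)) :
  entropy_part f mu (fun n i => pi n @^-1` Q n i) =
  entropy_part g (fun n B => mu n (pi n @^-1` B)) Q.
Proof.
rewrite /entropy_part; congr limn_esup; apply/funext => m.
suff -> : join_piece f (fun n i => pi n @^-1` Q n i) (m := m) =
          (fun s => pi 0%N @^-1` join_piece g Q s) by [].
by apply/funext => s; exact: join_piece_preimage.
Qed.

Lemma entropy_EM_le_preimage (mu : forall n, set (X n) -> \bar R) :
  (forall n, compact [set: X n]) -> equicontinuous_seq pi ->
  (entropy_EM g (fun n B => mu n (pi n @^-1` B)) <= entropy_EM f mu)%E.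
Proof.
move=> cX epi; apply: ge_ereal_sup => e [k [Q [MQ ->]]].
apply: ereal_sup_ubound; exists k, (fun n i => pi n @^-1` Q n i).
by rewrite entropy_part_preimage; split => //; exact: Misiurewicz_preimage.
Qed.

End Pullback.

Theorem mainTheorem8 (R : realType) (X Y : nat -> ptMetricType R)
  (f : forall n, X n -> X n.+1) (g : forall n, Y n -> Y n.+1)
  (pi : forall n, X n -> Y n)
  (mu : forall n, probability (Borel (X n)) R) :
  (forall n, compact [set: X n]) -> (forall n, compact [set: Y n]) ->
  (forall n, continuous (f n)) -> (forall n, continuous (g n)) ->
  equicontinuous_seq f -> equicontinuous_seq g ->
  equicontinuous_seq pi ->
  (forall n, pi n.+1 \o f n = g n \o pi n) ->
  invariant_seq f (fun n => mu n) ->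
  let nu : forall n, set (Y n) -> \bar R :=
    fun n => fun B => mu n (pi n @^-1` B) in
  [/\ invariant_seq g nu,
      forall (k : nat -> nat) (Q : forall n, 'I_(k n) -> set (Y n)),
        Misiurewicz nu Q ->
        Misiurewicz (fun n => mu n) (fun n i => pi n @^-1` Q n i) &
      (entropy_EM g nu <= entropy_EM f (fun n => mu n))%E].
Proof.
move=> cX _ _ _ _ _ epi semiconj inv nu; split.
- exact: invariant_seq_pushforward (@equicontinuous_seq_continuous _ _ _ _ epi) inv.
- by move=> k Q; exact: Misiurewicz_preimage.
- exact: entropy_EM_le_preimage.
Qed.
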